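(* Let $T>0$, $M>0$ and $\varepsilon\in(\varepsilon_j)_{j\in\mathbb N}$ be such that $\|u_{0\varepsilon}-\varepsilon\|_{\Phi,\infty}<\infty$. Then any solution $u_\varepsilon$ of the regularized problem which satisfies $\int_\Omega|\nabla u_\varepsilon(t)|^2\le M$ for all $t\in[0,T]$ fulfils $$\|u_\varepsilon(t)-\varepsilon\|_{\Phi,\infty}\le\max\{M,\|u_{0\varepsilon}-\varepsilon\|_{\Phi,\infty}\}\quad\text{for } t\in[0,T].$$
   Context: $\Omega\subset\mathbb{R}^N$ is a bounded smooth domain; $\Phi$ solves $-\Delta\Phi=1$ in $\Omega$, $\Phi=0$ on $\partial\Omega$, and $\|v\|_{\Phi,\infty}:=\operatorname{ess\,sup}_\Omega|v/\Phi|$. $(\varepsilon_j)\subset(0,1)$ decreases to $0$; $\rho_\varepsilon(z):=\min\{z,1/\varepsilon\}$; $(u_{0\varepsilon})_{\varepsilon\in(\varepsilon_j)}\subset C^3(\bar\Omega)$ with $u_{0\varepsilon}\ge\varepsilon$ in $\Omega$, $u_{0\varepsilon}=\varepsilon$ and $\Delta u_{0\varepsilon}=-\int_\Omega|\nabla u_{0\varepsilon}|^2$ on $\partial\Omega$. The regularized problem is $u_{\varepsilon t}=u_\varepsilon\Delta u_\varepsilon+u_\varepsilon\rho_\varepsilon(\int_\Omega|\nabla u_\varepsilon|^2)$ in $\Omega\times(0,\infty)$, $u_\varepsilon=\varepsilon$ on $\partial\Omega$, $u_\varepsilon(\cdot,0)=u_{0\varepsilon}$, with classical solutions in $C^{2,1}(\bar\Omega\times[0,\infty))$.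 *)

From HB Require Import structures.
From mathcomp Require Import all_boot all_order all_algebra.
From mathcomp Require Import all_classical all_reals all_analysis.
Set Implicit Arguments. Unset Strict Implicit. Unset Printing Implicit Defensive.
Import Order.TTheory GRing.Theory Num.Theory.
Import numFieldNormedType.Exports.
Local Open Scope classical_set_scope.
Local Open Scope ring_scope.

Section Defs.
Variables (R : realType) (N : nat).
Local Notation V := 'rV[R]_N.

Definition evec (i : 'I_N) : V := delta_mx 0 i.
Definition partial (i : 'I_N) (f : V -> R) (x : V) : R := 'D_(evec i) f x.
Definition pderivs (s : seq 'I_N) (f : V -> R) : V -> R := foldr partial f s.
Definition lap (f : V -> R) (x : V) : R := \sum_(i < N) partial i (partial i f) x.
Definition gradsq (f : V -> R) (x : V) : R := \sum_(i < N) (partial i f x) ^+ 2.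
End Defs.
Arguments evec {R N}.
Arguments partial {R N}.
Arguments pderivs {R N}.
Arguments lap {R N}.
Arguments gradsq {R N}.

Fixpoint iint (R : realType) (n : nat) : ('rV[R]_n -> \bar R) -> \bar R :=
  match n with
  | 0 => fun f => f 0
  | n'.+1 => fun f => (\int[@lebesgue_measure R]_x
                         iint (fun v : 'rV[R]_n' => f (row_mx (x%:M) v)))%E
  end.

Section Defs2.
Variables (R : realType) (N : nat).
Local Notation V := 'rV[R]_N.
Local Open Scope classical_set_scope.
Local Open Scope ring_scope.

Definition bdry (Om : set V) : set V := closure Om `\` Om.

Definition smooth (f : V -> R) : Prop :=
  forall s : seq 'I_N, continuous (pderivs s f) /\
    forall x i, derivable (pderivs s f) x (evec i).

Definition smooth_bounded_domain (Om : set V) : Prop :=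
  [/\ open Om, connected Om, Om !=set0, bounded_set Om &
      exists r : V -> R, [/\ smooth r, Om = [set x | r x < 0] &
        forall x, r x = 0 -> exists i, partial i r x != 0]].

Definition torsion_function (Om : set V) (Phi : V -> R) : Prop :=
  [/\ {within closure Om, continuous Phi},
      forall x, Om x -> (forall i, derivable Phi x (evec i)) /\
                        (forall i j, derivable (partial i Phi) x (evec j)),
      forall x, Om x -> - lap Phi x = 1 &
      forall x, bdry Om x -> Phi x = 0].

Definition cont_ext (Om : set V) (g : V -> R) : Prop :=
  exists G : V -> R, {within closure Om, continuous G} /\
    forall x, Om x -> G x = g x.

Definition Ck_closure (k : nat) (Om : set V) (f : V -> R) : Prop :=
  {within closure Om, continuous f} /\
  forall s : seq 'I_N, (size s <= k)%N ->
    (forall x i, Om x -> (size s < k)%N -> derivable (pderivs s f) x (evec i)) /\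
    cont_ext Om (pderivs s f).

Definition cont_ext_t (Om : set V) (F : V -> R -> R) : Prop :=
  exists G : V * R -> R,
    {within closure Om `*` `[0, +oo[, continuous G} /\
    forall x t, Om x -> 0 < t -> G (x, t) = F x t.

Definition dt (u : R -> V -> R) (t : R) (x : V) : R := derive1 (fun s => u s x) t.

Definition C21 (Om : set V) (u : R -> V -> R) : Prop :=
  [/\ {within closure Om `*` `[0, +oo[, continuous (fun p : V * R => u p.2 p.1)},
      forall x t, Om x -> 0 < t ->
        [/\ derivable (fun s => u s x) t 1,
            forall i, derivable (u t) x (evec i) &
            forall i j, derivable (partial i (u t)) x (evec j)],
      cont_ext_t Om (fun x t => dt u t x),
      forall i, cont_ext_t Om (fun x t => partial i (u t) x) &
      forall i j, cont_ext_t Om (fun x t => partial j (partial i (u t)) x)].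

(* Lebesgue integral over R^N (iterated; the integrands used are nonnegative) *)
Definition dirichlet (Om : set V) (f : V -> R) : \bar R :=
  iint (fun x => (\1_Om x * gradsq f x)%:E).

Definition ess_sup_on (Om : set V) (g : V -> \bar R) : \bar R :=
  ereal_inf [set c : \bar R |
    iint (fun x => (\1_[set y | Om y /\ (c < g y)%E] x)%:E) = 0%E].

Definition phinorm (Om : set V) (Phi : V -> R) (v : V -> R) : \bar R :=
  ess_sup_on Om (fun x => (`|v x / Phi x|)%:E).

Definition rho (eps z : R) : R := Order.min z eps^-1.
End Defs2.

From HB Require Import structures.
From mathcomp Require Import all_boot all_order all_algebra.
From mathcomp Require Import all_classical all_reals all_analysis.
From mathcomp Require Import ring lra.
Import Order.TTheory GRing.Theory Num.Theory.
Import numFieldNormedType.Exports.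
Local Open Scope classical_set_scope.
Local Open Scope ring_scope.
Set Implicit Arguments. Unset Strict Implicit. Unset Printing Implicit Defensive.

(* With K := max{M, ||u0 - eps||_{Phi,oo}}, the claim follows from the two-sided bound
   eps <= u <= eps + K Phi on closure(Om) x [0, T], since Phi > 0 in Om (an interior minimum
   is impossible because Delta Phi = -1) and the Phi-norm of a continuous v dominates
   |v / Phi| pointwise (a strict excess at a point persists on a box of positive measure).

   Both inequalities come from a weak maximum principle: the continuous function
   a u - b Phi - dl t attains its maximum on the compact cylinder closure(Om) x [0, tau], and at
   an interior maximum the Laplacian part is nonpositive while the left time derivative is at
   least dl.  For w = u - K Phi - dl t - eps, a positive interior maximum forces u > 0 and
   Delta u <= -K <= -rho, hence u_t = u (Delta u + rho) <= 0 < dl.  For eps - u - dl t one needs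
   u >= 0; this holds up to the first time u reaches eps/2, where the lower bound eps then
   yields a contradiction.  Letting dl -> 0 concludes. *)

Section RealCalculus.
Variable R : realType.

Lemma left_slope_le_derive (f : R -> R) (t a d : R) : 0 < t -> derivable f t 1 ->
  (forall s, 0 <= s <= t -> a * (f s - f t) <= d * (s - t)) ->
  d <= a * 'D_1 f t.
Proof.
move=> t0 df H.
have daf : derivable (a \*: f) t 1 by apply: derivableZ.
rewrite -[a * _]/(a *: 'D_1 f t) -deriveZ // ['D_1 (a \*: f) t]cvg_at_leftE //.
apply: limr_ge.
  rewrite -(cvg_at_leftE (fun h : R => h^-1 *: (((a \*: f) \o shift t) _ - (a \*: f) t))) //.
  apply: cvg_trans daf; apply: cvg_app => A [e e0 Ae].
  by exists e => // x xe x0; apply: Ae => //; exact/ltr0_neq0.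
near=> h.
have h0 : h < 0 by near: h; exists 1 => //=.
have ht : - t < h.
  near: h; exists t => //= h; rewrite /ball /= sub0r normrN => /ltr_normlP [] ? ? ?; lra.
have Hh : a * (f (h + t) - f t) <= d * h.
  by have := H (h + t); rewrite (_ : h + t - t = h); [apply; apply/andP; split|]; lra.
rewrite /= [_%:A]mulr1 /GRing.scale /= -mulrBr -(@ler_nM2l _ h) //.
by rewrite mulVKf ?ltr0_neq0 // [h * d]mulrC.
Unshelve. all: by end_near. Qed.

Lemma derive_eq0_at_local_max (g g1 : R -> R) (r : R) : 0 < r ->
  (forall h, `|h| < r -> g h <= g 0) ->
  (forall h, `|h| < r -> is_derive h (1 : R) g (g1 h)) -> g1 0 = 0.
Proof.
move=> r0 gmax gder.
have ball_r h : - r < h < r -> `|h| < r by move=> /andP[? ?]; rewrite ltr_norml; lra.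
have g0 : is_derive (0 : R) (1 : R) g 0.
  apply: (@derive1_at_max _ g (- r) r 0); first lra.
  - by move=> t; rewrite in_itv /= => /ball_r /gder [].
  - by rewrite in_itv /=; lra.
  - by move=> t; rewrite in_itv /= => /ball_r; exact: gmax.
have g1g : is_derive (0 : R) (1 : R) g (g1 0) by apply: gder; rewrite normr0.
by rewrite -(derive_val (is_derive := g1g)) (derive_val (is_derive := g0)).
Qed.

(* If d > 0 then g1 > 0 just right of 0, so by the mean value theorem g h0 > g 0. *)
Lemma derive2_le0_at_max (g g1 : R -> R) (d r : R) : 0 < r ->
  (forall h, `|h| < r -> g h <= g 0) ->
  (forall h, `|h| < r -> is_derive h (1 : R) g (g1 h)) ->
  is_derive (0 : R) (1 : R) g1 d -> d <= 0.
Proof.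
move=> r0 gmax gder g1d.
have g10 := derive_eq0_at_local_max r0 gmax gder.
rewrite leNgt; apply/negP => d0.
have g1_quot : (fun h : R => h^-1 *: ((g1 \o shift 0) (h *: 1) - g1 0)) @ 0^' --> d.
  by rewrite -(derive_val (is_derive := g1d)); exact: ex_derive.
have [e /= e0 He] := cvgr_gt _ g1_quot (d / 2) ltac:(lra).
pose h0 := Order.min e r / 2.
have m0 : 0 < Order.min e r by rewrite lt_min e0 r0.
have [me mr] : Order.min e r <= e /\ Order.min e r <= r by rewrite !ge_min !lexx orbT.
have h0e : h0 < e by rewrite /h0; lra.
have h0r : h0 < r by rewrite /h0; lra.
have [c cI gMVT] : exists2 c, c \in `]0, h0[ & g h0 - g 0 = g1 c * (h0 - 0).
  apply: MVT; first by rewrite /h0; lra.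
    move=> x; rewrite in_itv /= => /andP[? ?]; apply: gder.
    by rewrite ger0_norm; lra.
  apply: derivable_within_continuous => x; rewrite in_itv /= => /andP[? ?].
  by have /gder[] : `|x| < r by rewrite ger0_norm; lra.
move: cI; rewrite in_itv /= => /andP[c0 ch0].
have := He c; rewrite /ball /= sub0r normrN ger0_norm; last lra.
move=> /(_ ltac:(lra) (lt0r_neq0 c0)).
rewrite /= [c *: 1]mulr1 addr0 g10 subr0 /GRing.scale /= => Hc.
have g1c : 0 < g1 c.
  have : 0 < c^-1 * g1 c by lra.
  by rewrite pmulr_rgt0 // invr_gt0.
have := gmax h0; rewrite ger0_norm; last lra.
move=> /(_ h0r); rewrite -subr_le0 gMVT subr0.
have : 0 < g1 c * h0 by apply: mulr_gt0 => //; lra.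
lra.
Qed.

End RealCalculus.

Section LineRestriction.
Variables (R : realType) (V : normedModType R).

Lemma is_derive_line (f : V -> R) (x v : V) (h0 : R) :
  derivable f (h0 *: v + x) v ->
  is_derive h0 (1 : R) (fun h : R => f (h *: v + x)) ('D_v f (h0 *: v + x)).
Proof.
move=> df.
have E : (fun k : R => k^-1 *: (((fun h : R => f (h *: v + x)) \o shift h0) (k *: 1)
                                 - f (h0 *: v + x)))
       = (fun k : R => k^-1 *: ((f \o shift (h0 *: v + x)) (k *: v) - f (h0 *: v + x))).
  by apply: funext => k /=; rewrite [k%:A]mulr1 scalerDl addrA.
by apply: DeriveDef; [rewrite /derivable E | rewrite /derive E].
Qed.

Lemma is_derive_line_comb (f1 f2 : V -> R) (a b : R) (x v : V) (h0 : R) :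
  derivable f1 (h0 *: v + x) v -> derivable f2 (h0 *: v + x) v ->
  is_derive h0 (1 : R) (fun h : R => a * f1 (h *: v + x) - b * f2 (h *: v + x))
    (a * 'D_v f1 (h0 *: v + x) - b * 'D_v f2 (h0 *: v + x)).
Proof.
move=> /is_derive_line D1 /is_derive_line D2.
exact: (is_deriveB (f := a \*: _) (g := b \*: _)).
Qed.

End LineRestriction.

Section SpatialMaximum.
Variable R : realType.

Lemma ball_entrywise m n (x y : 'M[R]_(m, n)) (r : R) : 0 < r ->
  (forall i j, `|x i j - y i j| < r) -> ball x r y.
Proof.
move=> r0 H; rewrite -ball_normE /=; change (mx_norm (x - y) < r); rewrite mx_normrE.
by apply: Order.PreorderTheory.bigmax_lt => // ij _; rewrite !mxE; apply: H.
Qed.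

Lemma ball_shift_evec N (x : 'rV[R]_N) (i : 'I_N) (h r : R) : `|h| < r ->
  ball x r (h *: evec i + x).
Proof.
move=> hr; apply: ball_entrywise => [|a b]; first exact: le_lt_trans hr.
rewrite /evec !mxE opprD addrCA subrr addr0 normrN normrM.
by case: (_ && _); rewrite ?normr1 ?mulr1 // normr0 mulr0; exact: le_lt_trans hr.
Qed.

Lemma lap_comb_le0_at_max N (Om : set 'rV[R]_N) (f1 f2 : 'rV[R]_N -> R) (a b : R) x :
  open Om -> Om x ->
  (forall y i, Om y -> derivable f1 y (evec i)) ->
  (forall y i, Om y -> derivable f2 y (evec i)) ->
  (forall i, derivable (partial i f1) x (evec i)) ->
  (forall i, derivable (partial i f2) x (evec i)) ->
  (forall y, Om y -> a * f1 y - b * f2 y <= a * f1 x - b * f2 x) ->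
  a * lap f1 x - b * lap f2 x <= 0.
Proof.
move=> oOm Omx d1 d2 dd1 dd2 xmax.
have /nbhs_ballP[r /= r0 rOm] := oOm x Omx.
have inOm h i : `|h| < r -> Om (h *: evec i + x).
  by move=> hr; apply: rOm; exact: ball_shift_evec.
rewrite /lap !mulr_sumr -sumrB; apply: sumr_le0 => i _.
pose g h := a * f1 (h *: evec i + x) - b * f2 (h *: evec i + x).
pose g1 h := a * partial i f1 (h *: evec i + x) - b * partial i f2 (h *: evec i + x).
apply: (@derive2_le0_at_max _ g g1 _ r r0).
- move=> h /(inOm h i) Omh; have := xmax _ Omh.
  by rewrite /g scale0r add0r.
- by move=> h /(inOm h i) Omh; apply: is_derive_line_comb; [apply: d1 | apply: d2].
- have := @is_derive_line_comb _ _ (partial i f1) (partial i f2) a b x (evec i) 0.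
  by rewrite scale0r add0r; apply; [apply: dd1 | apply: dd2].
Qed.

End SpatialMaximum.

Section Topology.
Variable R : realType.

Lemma bounded_closure N (A : set 'rV[R]_N) : bounded_set A -> bounded_set (closure A).
Proof.
move=> [M0 [M0r AM]]; exists (M0 + 1); split; first by rewrite realD ?real1.
move=> M M0M x clx.
have [y [Ay xy]] := clx _ (nbhsx_ballx x 1 ltr01).
have := AM (M - 1) ltac:(lra) y Ay.
move: xy; rewrite -ball_normE /= => xy.
have := ler_normD y (x - y); rewrite addrC subrK; lra.
Qed.

Lemma compact_closure_bounded N (A : set 'rV[R]_N) :
  bounded_set A -> compact (closure A).
Proof.
by move=> bA; apply: bounded_closed_compact; [exact: bounded_closure | exact: closed_closure].
Qed.

Lemma continuous_within_fst {T U : topologicalType} (A : set (T * U)) (B : set T)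
    (f : T -> R) :
  (forall p, A p -> B p.1) -> {within B, continuous f} ->
  {within A, continuous (fun p => f p.1)}.
Proof.
move=> AB /subspace_continuousP cf; apply/subspace_continuousP => p Ap W /(cf _ (AB p Ap)) fW.
exists ((fun y => B y -> W (f y)), setT) => /=; first by split => //; exact: filterT.
by case=> y z [/= yW _] Ayz; apply: yW; apply: (AB (y, z)).
Qed.

Lemma continuous_within_snd {T U : topologicalType} (A : set (T * U)) :
  {within A, continuous (@snd T U)}.
Proof.
apply/subspace_continuousP => p Ap W pW.
by exists (setT, W) => [|[y z] [/= _]] //=; split => //; exact: filterT.
Qed.

Lemma closed_setX {T U : topologicalType} (A : set T) (B : set U) :
  closed A -> closed B -> closed (A `*` B).
Proof.
move=> cA cB [p q] clpq; split => /=.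
  apply: cA => W pW.
  have [[y z] [[Ay _] /= [Wy _]]] : (A `*` B) `&` (W `*` setT) !=set0.
    by apply: clpq; exists (W, setT) => //=; split => //; exact: filterT.
  by exists y.
apply: cB => W qW.
have [[y z] [[_ Bz] /= [_ Wz]]] : (A `*` B) `&` (setT `*` W) !=set0.
  by apply: clpq; exists (setT, W) => //=; split => //; exact: filterT.
by exists z.
Qed.

Lemma closed_sublevel_within {T : topologicalType} (B A : set T) (f : T -> R) c :
  {within B, continuous f} -> closed A -> A `<=` B ->
  closed (A `&` [set p | f p <= c]).
Proof.
move=> /subspace_continuousP cf cA AB p clp.
have Ap : A p by apply: cA => W pW; have [q [[Aq _] Wq]] := clp W pW; exists q.
split => //=; rewrite leNgt; apply/negP => fpc.
have fgt : nbhs p (fun q => B q -> c < f q) by exact: cvgr_gt _ (cf p (AB p Ap)) c fpc.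
by have [q [[Aq /= fq] /(_ (AB q Aq))]] := clp _ fgt; lra.
Qed.

Lemma ge_within_of_nbhs {T : topologicalType} (B : set T) (f : T -> R) c p :
  {within B, continuous f} -> B p ->
  (forall W, nbhs p W -> exists q, [/\ B q, W q & c <= f q]) -> c <= f p.
Proof.
move=> /subspace_continuousP cf Bp H; rewrite leNgt; apply/negP => fpc.
have flt : nbhs p (fun q => B q -> f q < c) by exact: cvgr_lt _ (cf p Bp) c fpc.
by have [q [Bq /(_ Bq) ? ?]] := H _ flt; lra.
Qed.

End Topology.

Section ParabolicMaximumPrinciple.
Variables (R : realType) (N : nat) (Om : set 'rV[R]_N) (Phi : 'rV[R]_N -> R)
  (u : R -> 'rV[R]_N -> R) (a b dl c0 tau : R).
Hypotheses (oOm : open Om) (bOm : bounded_set Om) (Om0 : Om !=set0).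
Hypothesis cu :
  {within closure Om `*` `[0, +oo[, continuous (fun p : 'rV[R]_N * R => u p.2 p.1)}.
Hypothesis cPhi : {within closure Om, continuous Phi}.
Hypothesis dPhi : forall x, Om x ->
  (forall i, derivable Phi x (evec i)) /\ (forall i j, derivable (partial i Phi) x (evec j)).
Hypothesis du : forall x t, Om x -> 0 < t ->
  [/\ derivable (fun s => u s x) t 1, forall i, derivable (u t) x (evec i) &
      forall i j, derivable (partial i (u t)) x (evec j)].

Local Notation G x t := (a * u t x - b * Phi x - dl * t - c0).
Local Notation cylinder := (closure Om `*` `[0, tau]).

Lemma cylinder_in_halfspace : cylinder `<=` closure Om `*` `[0, +oo[.
Proof.
move=> [y s] [/= Cy]; rewrite in_itv /= => /andP[s0 _].
by split; rewrite //= in_itv /= s0.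
Qed.

Lemma continuous_cylinder_comb : {within cylinder, continuous (fun p => G p.1 p.2)}.
Proof.
have cuA := continuous_subspaceW cylinder_in_halfspace cu.
have cPhiA := continuous_within_fst (A := cylinder) (fun p pA => proj1 pA) cPhi.
have csA := continuous_within_snd (A := cylinder).
rewrite continuous_subspace_in => p pA.
apply: cvgB; last exact: cvg_cst.
apply: cvgB; [apply: cvgB |]; apply: cvgM; by [exact: cvg_cst | exact: cuA | exact: cPhiA | exact: csA].
Qed.

Lemma cylinder_max_lap_dt xs ts : Om xs -> 0 < ts <= tau ->
  (forall y s, closure Om y -> 0 <= s <= tau -> G y s <= G xs ts) ->
  a * lap (u ts) xs - b * lap Phi xs <= 0 /\ dl <= a * dt u ts xs.
Proof.
move=> Omxs /andP[ts0 tstau] xsmax.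
have [dut _ du2] := du Omxs ts0.
have tsI : 0 <= ts <= tau by rewrite (ltW ts0).
split.
- apply: (lap_comb_le0_at_max oOm Omxs) => [y i Omy|y i /dPhi[]//|i|i|y Omy].
  + by have [_ ? _] := du Omy ts0.
  + exact: du2.
  + by have [_] := dPhi Omxs; apply.
  + by have := xsmax y ts (subset_closure Omy) tsI; lra.
- rewrite /dt derive1E; apply: left_slope_le_derive => // s /andP[s0 sts].
  have sI : 0 <= s <= tau by rewrite s0 (le_trans sts tstau).
  by have := xsmax xs s (subset_closure Omxs) sI; lra.
Qed.

Lemma parabolic_max_principle :
  0 <= tau ->
  (forall x t, Om x -> 0 < t <= tau -> 0 < G x t ->
     a * lap (u t) x - b * lap Phi x <= 0 -> dl <= a * dt u t x -> False) ->
  (forall x t, closure Om x -> 0 <= t <= tau -> (~ Om x \/ t = 0) -> G x t <= 0) ->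
  forall x t, closure Om x -> 0 <= t <= tau -> G x t <= 0.
Proof.
move=> tau0 interior parabolic_bdry.
have [x0 Omx0] := Om0.
have A0 : cylinder !=set0.
  by exists (x0, 0); split; [exact: subset_closure | rewrite /= in_itv /= lexx].
have cA : compact cylinder.
  exact: compact_setX (compact_closure_bounded bOm) (@segment_compact _ 0 tau).
have [[xs ts] /set_mem[/= Cxs]] := compact_EVT_max A0 cA continuous_cylinder_comb.
rewrite /= in_itv /= => tsI xsmax.
have {}xsmax y s : closure Om y -> 0 <= s <= tau -> G y s <= G xs ts.
  by move=> Cy sI; apply: (xsmax (y, s)); rewrite inE; split; rewrite //= in_itv.
suff Gmax : G xs ts <= 0 by move=> x t Cx tI; exact: le_trans (xsmax x t Cx tI) Gmax.
rewrite leNgt; apply/negP => Gpos.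
have [Omxs|] := pselect (Om xs); last first.
  by move=> nOm; move: Gpos; rewrite ltNge parabolic_bdry //; left.
have [ts0|] := ltP 0 ts; last first.
  move=> ts_le0; have ts_eq : ts = 0 by apply/eqP; rewrite eq_le ts_le0; case/andP: tsI.
  by move: Gpos; rewrite ltNge parabolic_bdry //; right.
have tsI' : 0 < ts <= tau by rewrite ts0; case/andP: tsI.
have [lapc dtc] := cylinder_max_lap_dt Omxs tsI' xsmax.
exact: interior xs ts Omxs tsI' Gpos lapc dtc.
Qed.

End ParabolicMaximumPrinciple.

Section IteratedIntegral.
Variable R : realType.
Local Open Scope ereal_scope.

Lemma ge0_le_integral_all (f g : R -> \bar R) : (forall x, 0 <= f x) ->
  (forall x, f x <= g x) ->
  \int[@lebesgue_measure R]_x f x <= \int[@lebesgue_measure R]_x g x.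
Proof.
move=> f0 fg; have g0 x : 0 <= g x by exact: le_trans (fg x).
rewrite !ge0_integralE //; apply: ereal_sup_le => _ [h /= hf <-].
by exists h => //= x; apply: le_trans (hf x) _; rewrite !patch_setT.
Qed.

Lemma iint_ge0 n (f : 'rV[R]_n -> \bar R) : (forall x, 0 <= f x) -> 0 <= iint f.
Proof.
elim: n f => [|n IH] f f0 /=; first exact: f0.
by apply: integral_ge0 => x _; apply: IH.
Qed.

Lemma le_iint n (f g : 'rV[R]_n -> \bar R) : (forall x, 0 <= f x) ->
  (forall x, f x <= g x) -> iint f <= iint g.
Proof.
elim: n f g => [|n IH] f g f0 fg /=; first exact: fg.
apply: ge0_le_integral_all => x; first by apply: iint_ge0.
by apply: IH.
Qed.

Lemma iint0 n : iint (fun _ : 'rV[R]_n => 0) = 0.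
Proof.
elim: n => [|n IH] //=.
by rewrite (_ : (fun x : R => _) = cst 0) ?integral0 //; apply: funext => x; rewrite IH.
Qed.

Definition box n (c : 'rV[R]_n) (r : R) : set 'rV[R]_n :=
  [set y | forall k, `|y ord0 k - c ord0 k| < r]%R.

Lemma box_row_mx n (c : 'rV[R]_(1 + n)) r (x : R) (v : 'rV[R]_n) :
  box c r (row_mx x%:M v) <->
  (`|x - c ord0 (@lshift 1 n ord0)| < r)%R /\ box (\row_k c ord0 (rshift 1 k)) r v.
Proof.
split=> [cv|[cx cv] k].
  split; first by have := cv (@lshift 1 n ord0); rewrite row_mxEl mxE eqxx mulr1n.
  by move=> k; have := cv (rshift 1 k); rewrite row_mxEr mxE.
rewrite -(splitK k); case: (fintype.split k) => i /=.
  by rewrite row_mxEl mxE (ord1 i) eqxx mulr1n.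
by rewrite row_mxEr; have := cv i; rewrite mxE.
Qed.

Lemma iint_box_slice n (c : 'rV[R]_(1 + n)) (r : R) (x : R) :
  iint (fun v : 'rV[R]_n => (\1_(box c r) (row_mx x%:M v))%:E) =
  iint (fun v => (\1_(box (\row_k c ord0 (rshift 1 k)) r) v)%:E) *
  (\1_[set y : R | `|y - c ord0 (@lshift 1 n ord0)| < r]%R x)%:E.
Proof.
have [cx|ncx] := pselect (`|x - c ord0 (@lshift 1 n ord0)| < r)%R.
  rewrite indicE mem_set // mule1; congr iint; apply: funext => v.
  have [cv|ncv] := pselect (box (\row_k c ord0 (rshift 1 k)) r v).
    by rewrite !indicE !mem_set //; exact/box_row_mx.
  by rewrite !indicE !memNset // => /box_row_mx[].
rewrite indicE memNset // mule0 -[RHS](iint0 n); congr iint; apply: funext => v.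
by rewrite indicE memNset // => /box_row_mx[].
Qed.

Lemma iint_box n (c : 'rV[R]_n) (r : R) : (0 < r)%R ->
  iint (fun y => (\1_(box c r) y)%:E) = ((r *+ 2) ^+ n)%:E.
Proof.
move=> r0; elim: n c => [|n IH] c /=.
  by rewrite indicE mem_set ?expr0 // => -[].
under eq_integral do rewrite iint_box_slice IH -EFinM.
set a := (c ord0 (@lshift 1 n ord0) - r)%R; set b := (c ord0 (@lshift 1 n ord0) + r)%R.
have Iab : [set y : R | `|y - c ord0 (@lshift 1 n ord0)| < r]%R = `]a, b[%classic.
  by apply: funext => y; apply: propext; rewrite /= in_itv /= distrC ltr_distlC.
have C0 : (0 <= (r *+ 2) ^+ n)%R by rewrite exprn_ge0 // mulrn_wge0 // ltW.
rewrite Iab (@integralZl_indic _ _ R lebesgue_measure setT measurableT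
  (fun _ => `]a, b[%classic) ((r *+ 2) ^+ n)) //; last first.
  by rewrite ltNge C0.
rewrite integral_indic // setIT.
have := lebesgue_measure_itv `]a, b[; rewrite /= lte_fin ifT; last first.
  by rewrite /a /b ltrD2l gtrN.
move=> ->; rewrite -EFinB -EFinM /a /b exprS; congr (_%:E); ring.
Qed.

End IteratedIntegral.

Section QuotientNorm.
Variables (R : realType) (N : nat) (Om : set 'rV[R]_N) (Phi : 'rV[R]_N -> R).
Hypothesis oOm : open Om.
Hypothesis cPhi : {within closure Om, continuous Phi}.

Lemma cvg_interior_within_closure (f : 'rV[R]_N -> R) x0 : Om x0 ->
  {within closure Om, continuous f} -> f @ nbhs x0 --> f x0.
Proof.
move=> Omx0 /subspace_continuousP cf.
have := cf x0 (subset_closure Omx0); rewrite within_interior //.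
by rewrite /interior; apply: filterS (subset_closure (A := Om)) _; exact: oOm.
Qed.

Lemma phinorm_le (v : 'rV[R]_N -> R) (K : R) :
  (forall x, Om x -> `|v x / Phi x| <= K) -> (phinorm Om Phi v <= K%:E)%E.
Proof.
move=> vK; apply: ge_ereal_inf; exists K%:E => //=.
rewrite -[RHS](iint0 R N); congr iint; apply: funext => y.
by rewrite indicE memNset //= => -[Omy]; rewrite lte_fin ltNge vK.
Qed.

Lemma phinorm_ge_nbhs (v : 'rV[R]_N -> R) (x0 : 'rV[R]_N) (c : R) :
  nbhs x0 [set y | Om y /\ c < `|v y / Phi y|] -> (c%:E <= phinorm Om Phi v)%E.
Proof.
move=> /nbhs_ballP[r /= r0 rball]; rewrite leNgt; apply/negP => /ereal_inf_lt[c' /= null c'c].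
have box_sub : box x0 r `<=` [set y | Om y /\ (c' < (`|v y / Phi y|)%:E)%E].
  move=> y x0y; have [Omy cy] : Om y /\ c < `|v y / Phi y|.
    by apply: rball; apply: ball_entrywise => // i j; rewrite (ord1 i) distrC; exact: x0y.
  by split => //; apply: lt_trans c'c _; rewrite lte_fin.
have : (iint (fun y => (\1_(box x0 r) y)%:E) <=
        iint (fun y => (\1_[set y | Om y /\ (c' < (`|v y / Phi y|)%:E)%E] y)%:E))%E.
  apply: le_iint => y; rewrite lee_fin //.
  have [x0y|nx0y] := pselect (box x0 r y); last by rewrite indicE memNset.
  by rewrite !indicE !mem_set //; exact: box_sub.
rewrite null iint_box // lee_fin leNgt => /negP; apply.
by apply: exprn_gt0; rewrite mulrn_wgt0.
Qed.

Lemma nbhs_quotient_gt (v : 'rV[R]_N -> R) (x0 : 'rV[R]_N) (c : R) : Om x0 ->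
  {within closure Om, continuous v} -> 0 <= c -> c < `|v x0 / Phi x0| ->
  nbhs x0 [set y | Om y /\ c < `|v y / Phi y|].
Proof.
move=> Omx0 cv c0 cx0.
have Phix0 : Phi x0 != 0.
  by apply: contraTneq cx0 => ->; rewrite invr0 mulr0 normr0 -leNgt.
have vPhi : (fun y => `|v y / Phi y|) @ nbhs x0 --> `|v x0 / Phi x0|.
  apply: cvg_norm; apply: cvgM; first exact: cvg_interior_within_closure.
  by apply: cvgV => //; exact: cvg_interior_within_closure.
apply: filterI; first exact: oOm.
exact: cvgr_gt _ vPhi c cx0.
Qed.

Lemma quotient_le_of_phinorm_le (v : 'rV[R]_N -> R) x (K : R) : Om x ->
  {within closure Om, continuous v} -> 0 <= K ->
  (phinorm Om Phi v <= K%:E)%E -> `|v x / Phi x| <= K.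
Proof.
move=> Omx cv K0 vK; rewrite leNgt; apply/negP => Kx.
pose c := (`|v x / Phi x| + K) / 2.
have cK : (c%:E <= K%:E)%E.
  have c0 : 0 <= c by rewrite /c; lra.
  have cx : c < `|v x / Phi x| by rewrite /c; lra.
  exact: le_trans (phinorm_ge_nbhs (nbhs_quotient_gt Omx cv c0 cx)) vK.
by move: cK; rewrite lee_fin /c; lra.
Qed.

End QuotientNorm.

Section TorsionFunction.
Variables (R : realType) (N : nat) (Om : set 'rV[R]_N) (Phi : 'rV[R]_N -> R).
Hypotheses (oOm : open Om) (bOm : bounded_set Om) (Om0 : Om !=set0).
Hypothesis torsion : torsion_function Om Phi.

Lemma torsion_no_interior_min x : Om x -> (forall y, Om y -> Phi x <= Phi y) -> False.
Proof.
case: torsion => _ dPhi lapPhi _ Omx xmin.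
have dPhi1 y i : Om y -> derivable Phi y (evec i) by move=> /dPhi[].
have dPhi2 i : derivable (partial i Phi) x (evec i) by have [_] := dPhi x Omx.
have : 0 * lap Phi x - 1 * lap Phi x <= 0.
  apply: (lap_comb_le0_at_max oOm Omx dPhi1 dPhi1 dPhi2 dPhi2) => y Omy.
  by have := xmin y Omy; lra.
by have := lapPhi x Omx; lra.
Qed.

Lemma torsion_pos x : Om x -> 0 < Phi x.
Proof.
have [cPhi _ _ bdPhi] := torsion.
have [y0 Omy0] := Om0.
have [xm /set_mem Cxm xmmin] := compact_EVT_min (ex_intro _ y0 (subset_closure Omy0))
  (compact_closure_bounded bOm) cPhi.
have {}xmmin y : Om y -> Phi xm <= Phi y by move=> Omy; apply/xmmin/mem_set/subset_closure.
have nOmxm : ~ Om xm by move=> Omxm; exact: torsion_no_interior_min Omxm xmmin.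
have Phi_ge0 y : Om y -> 0 <= Phi y by rewrite -(bdPhi xm) //; exact: xmmin.
move=> Omx; rewrite lt_neqAle Phi_ge0 // andbT; apply/eqP => Phix0.
by apply: (torsion_no_interior_min Omx) => y Omy; rewrite -Phix0; exact: Phi_ge0.
Qed.

End TorsionFunction.

Section FirstHittingTime.
Variables (R : realType) (T : topologicalType) (C : set T) (w : T * R -> R) (c : R).
Hypothesis cw : {within C `*` `[0, +oo[, continuous w}.

Lemma ge_at_first_time x s1 : C x -> 0 < s1 ->
  (forall s, 0 <= s < s1 -> c < w (x, s)) -> c <= w (x, s1).
Proof.
move=> Cx s10 before; apply: (ge_within_of_nbhs cw).
  by split => //=; rewrite in_itv /= ltW.
move=> W [[W1 W2] /= [W1x /nbhs_ballP[e /= e0 eW2]] W12].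
have [me ms] : Order.min e s1 <= e /\ Order.min e s1 <= s1 by rewrite !ge_min !lexx orbT.
have m0 : 0 < Order.min e s1 by rewrite lt_min e0 s10.
pose s' := s1 - Order.min e s1 / 2.
exists (x, s'); split.
- by split => //=; rewrite in_itv /= /s'; lra.
- apply: W12; split; first exact: nbhs_singleton.
  by apply: eW2; rewrite /ball /= /s' opprB addrC subrK ger0_norm; lra.
- by apply: ltW; apply: before; rewrite /s'; apply/andP; split; lra.
Qed.

Lemma first_hitting_time (t0 : R) : compact C -> closed C -> 0 <= t0 ->
  (forall x, C x -> c < w (x, 0)) ->
  (exists x t, [/\ C x, 0 <= t <= t0 & w (x, t) <= c]) ->
  exists x1 s1, [/\ C x1, 0 < s1 <= t0, w (x1, s1) <= c &
                   forall x s, C x -> 0 <= s <= s1 -> c <= w (x, s)].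
Proof.
move=> cC clC t00 init [xa [ta [Cxa taI wa]]].
pose A := C `*` `[0, t0].
have AB : A `<=` C `*` `[0, +oo[.
  move=> [y s] [/= Cy]; rewrite in_itv /= => /andP[s0 _].
  by split; rewrite //= in_itv /= s0.
pose Z := A `&` [set p | w p <= c].
have clA : closed A by apply: closed_setX => //; exact: interval_closed.
have clZ : closed Z by exact: (closed_sublevel_within (c := c) cw clA AB).
have cZ : compact Z.
  by apply: subclosed_compact clZ (compact_setX cC (@segment_compact R 0 t0)) _ => p [].
have Z0 : Z !=set0 by exists (xa, ta); split; rewrite //= in_itv.
have [[x1 s1] /set_mem[[/= Cx1]]] := compact_EVT_min Z0 cZ (continuous_within_snd (A := Z)).
rewrite in_itv /= => /andP[s10 s1t0] /= w1 s1min.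
have s1pos : 0 < s1.
  by rewrite lt_neqAle s10 andbT; apply: contraTneq w1 => <-; rewrite -ltNge init.
have before x s : C x -> 0 <= s < s1 -> c < w (x, s).
  move=> Cx /andP[s0 ss1]; rewrite ltNge; apply/negP => wxs.
  have Zxs : Z (x, s) by split=> //; split=> //=; rewrite in_itv /= s0; lra.
  by have /= := s1min (x, s) (mem_set Zxs); lra.
exists x1, s1; split; rewrite ?s1pos //.
move=> x s Cx /andP[s0 ss1]; have [lts|] := ltP s s1.
  by apply: ltW; apply: before; rewrite ?s0.
move=> s1s; rewrite (_ : s = s1); last lra.
exact: ge_at_first_time Cx s1pos (before x ^~ Cx).
Qed.

End FirstHittingTime.

Lemma le0_of_forall_slack (R : realFieldType) (x s : R) : 0 <= s ->
  (forall d, 0 < d -> x - d * s <= 0) -> x <= 0.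
Proof.
move=> s0 slack; apply/ler_addgt0Pr => e e0; rewrite add0r.
have := slack (e / (s + 1)) ltac:(rewrite divr_gt0 //; lra).
have : e / (s + 1) * s <= e.
  by rewrite mulrAC ler_pdivrMr; [nra | lra].
lra.
Qed.

Section RegularizedProblem.
Variables (R : realType) (N : nat) (Om : set 'rV[R]_N) (Phi : 'rV[R]_N -> R).
Variables (u : R -> 'rV[R]_N -> R) (u0 : 'rV[R]_N -> R) (rh : R -> R) (eps T : R).
Hypotheses (oOm : open Om) (bOm : bounded_set Om) (Om0 : Om !=set0).
Hypothesis torsion : torsion_function Om Phi.
Hypothesis cu :
  {within closure Om `*` `[0, +oo[, continuous (fun p : 'rV[R]_N * R => u p.2 p.1)}.
Hypothesis du : forall x t, Om x -> 0 < t ->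
  [/\ derivable (fun s => u s x) t 1, forall i, derivable (u t) x (evec i) &
      forall i j, derivable (partial i (u t)) x (evec j)].
Hypothesis pde : forall x t, Om x -> 0 < t ->
  dt u t x = u t x * lap (u t) x + u t x * rh t.
Hypothesis u_bdry : forall x t, bdry Om x -> 0 < t -> u t x = eps.
Hypothesis u_init : forall x, closure Om x -> u 0 x = u0 x.
Hypotheses (eps0 : 0 < eps) (T0 : 0 < T).
Hypothesis u0_ge : forall x, closure Om x -> eps <= u0 x.
Hypothesis rh_ge0 : forall t, 0 <= t <= T -> 0 <= rh t.

Lemma parabolic_bdry_values x t : closure Om x -> 0 <= t -> (~ Om x \/ t = 0) ->
  u t x = u0 x \/ (bdry Om x /\ u t x = eps).
Proof.
move=> Cx t0 [nOmx|->]; last by left; exact: u_init.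
have [->|tpos] := eqVneq t 0; first by left; exact: u_init.
have bx : bdry Om x by split.
by right; split => //; apply: u_bdry; rewrite // lt_def tpos.
Qed.

Lemma solution_ge_eps_of_ge0 tau : 0 <= tau <= T ->
  (forall x s, closure Om x -> 0 <= s <= tau -> 0 <= u s x) ->
  forall x s, closure Om x -> 0 <= s <= tau -> eps <= u s x.
Proof.
move=> /andP[tau0 tauT] u_ge0 x s Cx sI.
have [cPhi dPhi _ _] := torsion.
suff : eps - u s x <= 0 by lra.
apply: (le0_of_forall_slack (s := s)) => [|dl dl0]; first by case/andP: sI.
suff : -1 * u s x - 0 * Phi x - dl * s - - eps <= 0 by lra.
apply: (parabolic_max_principle (a := -1) (b := 0) (dl := dl) (c0 := - eps)
  oOm bOm Om0 cu cPhi dPhi du tau0 _ _ Cx sI).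
- move=> y t Omy /andP[t0 ttau] _ lap_ge0 dt_le.
  have tT : 0 <= t <= T by rewrite (ltW t0) (le_trans ttau tauT).
  have uy := u_ge0 y t (subset_closure Omy) ltac:(by rewrite (ltW t0)).
  have lap0 : 0 <= lap (u t) y by move: lap_ge0; rewrite mul0r subr0 mulN1r oppr_le0.
  have dt0 : 0 <= dt u t y by rewrite pde // addr_ge0 // mulr_ge0 // rh_ge0.
  by move: dt_le; rewrite mulN1r => /(lt_le_trans dl0); rewrite oppr_gt0 ltNge dt0.
- move=> y t Cy /andP[t0 _] /(parabolic_bdry_values Cy t0)[->|[_ ->]].
    by have := u0_ge Cy; have := mulr_ge0 (ltW dl0) t0; lra.
  by have := mulr_ge0 (ltW dl0) t0; lra.
Qed.

Lemma solution_ge_eps x s : closure Om x -> 0 <= s <= T -> eps <= u s x.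
Proof.
move=> Cx sI; have TI : 0 <= T <= T by rewrite (ltW T0) lexx.
have [eps2_0 eps2_eps] : 0 < eps / 2 /\ eps / 2 < eps by have := eps0; lra.
suff half y r : closure Om y -> 0 <= r <= T -> eps / 2 < u r y.
  apply: (solution_ge_eps_of_ge0 TI _ Cx sI) => y r Cy /(half y r Cy).
  by move/(lt_trans eps2_0)/ltW.
move=> Cy rI; rewrite ltNge; apply/negP => ur.
have init z : closure Om z -> eps / 2 < (fun p : 'rV[R]_N * R => u p.2 p.1) (z, 0).
  by move=> Cz /=; rewrite u_init //; exact: lt_le_trans eps2_eps (u0_ge Cz).
have [x1 [s1 [Cx1 /andP[s10 s1T] /= us1 after]]] :=
  first_hitting_time cu (compact_closure_bounded bOm) (@closed_closure _ Om) (ltW T0) init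
    (ex_intro _ y (ex_intro _ r (And3 Cy rI ur))).
have s1I : 0 <= s1 <= T by rewrite (ltW s10) s1T.
have u_ge0 z q : closure Om z -> 0 <= q <= s1 -> 0 <= u q z.
  by move=> Cz /(after z q Cz) /=; lra.
have s1s1 : 0 <= s1 <= s1 by rewrite (ltW s10) lexx.
by have := solution_ge_eps_of_ge0 s1I u_ge0 Cx1 s1s1; lra.
Qed.

Variable K : R.
Hypothesis K0 : 0 <= K.
Hypothesis rh_le : forall t, 0 <= t <= T -> rh t <= K.
Hypothesis u0_le : forall x, closure Om x -> u0 x - eps <= K * Phi x.

Lemma solution_le_torsion x s : closure Om x -> 0 <= s <= T -> u s x - eps <= K * Phi x.
Proof.
move=> Cx sI; have [cPhi dPhi lapPhi bdPhi] := torsion.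
suff : u s x - K * Phi x - eps <= 0 by lra.
apply: (le0_of_forall_slack (s := s)) => [|dl dl0]; first by case/andP: sI.
suff : 1 * u s x - K * Phi x - dl * s - eps <= 0 by lra.
apply: (parabolic_max_principle (a := 1) (b := K) (dl := dl) (c0 := eps)
  oOm bOm Om0 cu cPhi dPhi du (ltW T0) _ _ Cx sI).
- move=> y t Omy /andP[t0 tT] Gpos lapc dtc.
  have KPhi : 0 <= K * Phi y by rewrite mulr_ge0 // ltW // (torsion_pos oOm bOm Om0 torsion).
  have dlt : 0 <= dl * t by rewrite mulr_ge0 // ltW.
  have uy : 0 <= u t y by have := eps0; clear lapc dtc; lra.
  have lap_rh : lap (u t) y + rh t <= 0.
    have tI : 0 <= t <= T by rewrite (ltW t0) tT.
    have := rh_le tI; move: lapc.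
    by rewrite (_ : lap Phi y = -1); [lra | have := lapPhi y Omy; lra].
  have dt0 : dt u t y <= 0 by rewrite pde // -mulrDr; exact: mulr_ge0_le0.
  by move: dtc; rewrite mul1r => /(lt_le_trans dl0); rewrite ltNge dt0.
- have dlt t : 0 <= t -> 0 <= dl * t by move=> t0; rewrite mulr_ge0 // ltW.
  move=> y t Cy /andP[t0 _] /(parabolic_bdry_values Cy t0)[->|[yb ->]].
    by have := u0_le Cy; have := dlt t t0; lra.
  by rewrite bdPhi // mulr0; have := dlt t t0; lra.
Qed.

Lemma solution_quotient_le x t : Om x -> 0 <= t <= T -> `|(u t x - eps) / Phi x| <= K.
Proof.
move=> Omx tI; have Phix := torsion_pos oOm bOm Om0 torsion Omx.
have lower := solution_ge_eps (subset_closure Omx) tI.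
have upper := solution_le_torsion (subset_closure Omx) tI.
by rewrite ger0_norm ?divr_ge0 ?ler_pdivrMr //; [lra | exact: ltW].
Qed.

End RegularizedProblem.

Section ExtendedBounds.
Variable R : realType.

Lemma dirichlet_ge0 N (Om : set 'rV[R]_N) (f : 'rV[R]_N -> R) : (0 <= dirichlet Om f)%E.
Proof.
apply: iint_ge0 => x; rewrite lee_fin; apply: mulr_ge0; first by rewrite indicE ler0n.
by apply: sumr_ge0 => i _; exact: sqr_ge0.
Qed.

Lemma rho_fine_bounds (eps M : R) (z : \bar R) : 0 < eps -> (0 <= z)%E -> (z <= M%:E)%E ->
  0 <= rho eps (fine z) <= M.
Proof.
move=> eps0; case: z => [z | | ] //=; rewrite !lee_fin => z0 zM.
by rewrite le_min z0 invr_ge0 ltW //= ge_min zM.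
Qed.

Lemma fine_max_bounds (M : R) (L : \bar R) : 0 <= M -> (L < +oo)%E ->
  (L <= (Order.max M (fine L))%:E)%E /\ ((Order.max M (fine L))%:E <= Order.max M%:E L)%E.
Proof.
move=> M0; case: L => [r | | ] //= _.
  by split; [rewrite lee_fin le_max lexx orbT | rewrite EFin_max].
by split; [rewrite leNye | rewrite le_max lee_fin ge_max lexx M0].
Qed.

End ExtendedBounds.

Unset Implicit Arguments. Set Strict Implicit.

Theorem lemma2p7 (R : realType) (N : nat) (Om : set 'rV[R]_N) (Phi : 'rV[R]_N -> R)
  (epsj : nat -> R) (j : nat) (u0 : 'rV[R]_N -> R) (u : R -> 'rV[R]_N -> R)
  (T M : R) :
  (0 < N)%N ->
  smooth_bounded_domain Om ->
  torsion_function Om Phi ->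
  (forall k, 0 < epsj k < 1) ->
  (forall k, epsj k.+1 < epsj k) ->
  epsj @ \oo --> 0 ->
  (* standing assumptions on the initial datum u_{0 eps} for eps = epsj j *)
  Ck_closure 3 Om u0 ->
  (forall x, Om x -> epsj j <= u0 x) ->
  (forall x, bdry Om x -> u0 x = epsj j) ->
  (forall x, bdry Om x ->
     lap u0 @ within Om (nbhs x) --> - fine (dirichlet Om u0)) ->
  (* hypotheses of the lemma *)
  0 < T -> 0 < M ->
  Order.lt (phinorm Om Phi (fun x => u0 x - epsj j)) +oo%E ->
  (* u is a classical solution of the regularized problem *)
  C21 Om u ->
  (forall x t, Om x -> 0 < t ->
     dt u t x = u t x * lap (u t) x
                + u t x * rho (epsj j) (fine (dirichlet Om (u t)))) ->
  (forall x t, bdry Om x -> 0 < t -> u t x = epsj j) ->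
  (forall x, closure Om x -> u 0 x = u0 x) ->
  (forall t, 0 <= t <= T -> Order.le (dirichlet Om (u t)) M%:E) ->
  forall t, 0 <= t <= T ->
    Order.le (phinorm Om Phi (fun x => u t x - epsj j))
       (Order.max M%:E (phinorm Om Phi (fun x => u0 x - epsj j))).
Proof.
move=> _ [oOm _ Om0 bOm _] torsion /(_ j)/andP[eps0 _] _ _ [cu0 _] u0_in u0_bdry _
  T0 M0 L_fin [cu du _ _ _] pde u_bdry u_init dirM.
set eps := epsj j; set L := phinorm _ _ _ in L_fin *.
have [LK KL] := fine_max_bounds (ltW M0) L_fin.
set K := Order.max M (fine L) in LK KL.
have [cPhi _ _ bdPhi] := torsion.
have MK : M <= K by rewrite le_max lexx.
have K0 : 0 <= K by exact: le_trans (ltW M0) MK.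
pose rh s := rho eps (fine (dirichlet Om (u s))).
have rh_bounds s : 0 <= s <= T -> 0 <= rh s <= M.
  by move=> sI; apply: rho_fine_bounds; [| exact: dirichlet_ge0 | exact: dirM].
have rh_ge0 s : 0 <= s <= T -> 0 <= rh s by move=> /rh_bounds/andP[].
have rh_le s : 0 <= s <= T -> rh s <= K by move=> /rh_bounds/andP[_ /le_trans]; apply.
have u0_ge x : closure Om x -> eps <= u0 x.
  by move=> Cx; have [/u0_in|nOmx] := pselect (Om x); last rewrite u0_bdry.
have cv0 : {within closure Om, continuous (fun x => u0 x - eps)}.
  by rewrite continuous_subspace_in => x Cx; apply: cvgB; [exact: cu0 | exact: cvg_cst].
have u0_le x : closure Om x -> u0 x - eps <= K * Phi x.
  move=> Cx; have [Omx|nOmx] := pselect (Om x); last by rewrite u0_bdry // bdPhi // mulr0 subrr.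
  have := quotient_le_of_phinorm_le oOm cPhi Omx cv0 K0 LK.
  rewrite -ler_pdivrMr ?(torsion_pos oOm bOm Om0 torsion) //; exact: le_trans (ler_norm _).
move=> t tI; apply: le_trans KL; apply: phinorm_le => x Omx.
exact: (solution_quotient_le (rh := rh) oOm bOm Om0 torsion cu du pde u_bdry u_init
  eps0 T0 u0_ge rh_ge0 K0 rh_le u0_le Omx tI).
Qed.
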